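(* Let $\gamma$ be a connected braid of $S^1\times\mathbb{D}^2$ with $|n_\gamma|\ge2$. Then every canonical solenoid map associated to $\gamma$ belongs to $\mathcal{U}^{part.hyp}_\gamma$. In particular $\mathcal{U}^{part.hyp}_\gamma$ is non-empty.
   Context: $S^1=\mathbb{R}/\mathbb{Z}$, $\mathbb{D}^2$ the closed unit disk. A connected braid $\gamma$ is (the isotopy class of) an embedding $S^1\to S^1\times\mathbb{D}^2$ transverse to the disks $\{\theta\}\times\mathbb{D}^2$, with $n=n_\gamma\ne0$ the degree of the covering induced by projection to $S^1$. A canonical solenoid map associated to $\gamma$ is built as follows: choose a representative of the braid of the form $t\mapsto(n t, z(t))$, and $\delta>0$ such that for all $t$, $d(z(t),\partial\mathbb{D}^2)>2\delta$, and such that $t_1\ne t_2$, $nt_1=nt_2$ in $S^1$ imply $d(z(t_1),z(t_2))>2\delta$; then $f_{\gamma,\delta}(t,z)=(nt,\delta z+z(t))$. $\mathcal{U}_\gamma$: $C^1$ embeddings $f:S^1\times\mathbb{D}^2\to\mathrm{Int}(S^1\times\mathbb{D}^2)$ with $f(S^1\times\{0\})$ isotopic to $\gamma$. $\mathcal{C}_\alpha(x)=\{(u_1,u_2)\in\mathbb{R}\times\mathbb{R}^2:|u_2|\le\alpha|u_1|\}$. $\mathcal{U}^{part.hyp}_\gamma$: those $f\in\mathcal{U}_\gamma$ with $\alpha>0$, integer $\ell\ge1$, $\lambda>1$ such that $Df^\ell(\mathcal{C}_\alpha(x))\subset\mathcal{C}_\beta(f^\ell(x))$ for some $\beta<\alpha$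 and $|v_1|\ge\lambda|u_1|$ whenever $u\in\mathcal{C}_\alpha(x)$, $Df^\ell u=(v_1,v_2)$. *)

(* The solid torus S^1 x D^2 (S^1 = R/Z) is modelled
   through lifts: a point is a vector x : 'rV[R]_3, x 0 0 being a lift of the
   S^1-coordinate and (x 0 1, x 0 2) the D^2-coordinate.  Maps of the solid torus
   and curves S^1 -> S^1 x D^2 are represented by lifts that descend to the
   quotient. *)
From HB Require Import structures.
From mathcomp Require Import all_boot all_order all_algebra.
From mathcomp Require Import all_classical all_reals all_analysis.
Set Implicit Arguments. Unset Strict Implicit. Unset Printing Implicit Defensive.
Import Order.TTheory GRing.Theory Num.Theory.
Import numFieldNormedType.Exports.
Local Open Scope classical_set_scope.
Local Open Scope ring_scope.

Section SolidTorus.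
Variable R : realType.

Definition pt (a b c : R) : 'rV[R]_3 := \row_(i < 3) [:: a; b; c]`_i.
Definition thc (x : 'rV[R]_3) : R := x 0 0.
Definition w1c (x : 'rV[R]_3) : R := x 0 1.
Definition w2c (x : 'rV[R]_3) : R := x 0 2.

Definition enorm2 (a b : R) : R := Num.sqrt (a ^+ 2 + b ^+ 2).

Definition same_circle (a b : R) : Prop := exists k : int, b = a + k%:~R.

Definition eqST (x y : 'rV[R]_3) : Prop :=
  same_circle (thc x) (thc y) /\ w1c x = w1c y /\ w2c x = w2c y.

Definition solidT : set 'rV[R]_3 := [set x | enorm2 (w1c x) (w2c x) <= 1].
Definition int_solidT : set 'rV[R]_3 := [set x | enorm2 (w1c x) (w2c x) < 1].

Definition circle_embedding (g : R -> 'rV[R]_3) : Prop :=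
  continuous g /\
  (forall t, eqST (g t) (g (t + 1))) /\
  (forall t, solidT (g t)) /\
  (forall s t, eqST (g s) (g t) -> same_circle s t).

Definition isotopic (g0 g1 : R -> 'rV[R]_3) : Prop :=
  exists H : R -> R -> 'rV[R]_3,
    {within [set p : R * R | 0 <= p.1 <= 1], continuous (fun p => H p.1 p.2)} /\
    (forall s, 0 <= s <= 1 -> circle_embedding (H s)) /\
    (forall t, H 0 t = g0 t) /\ (forall t, H 1 t = g1 t).

Definition C1_on (F : 'rV[R]_3 -> 'rV[R]_3) (D : set 'rV[R]_3) : Prop :=
  (forall x, D x -> differentiable F x) /\
  (forall v : 'rV[R]_3, {within D, continuous (fun x => 'D_v F x)}).

Definition solid_torus_embedding (F : 'rV[R]_3 -> 'rV[R]_3) : Prop :=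
  C1_on F solidT /\
  (forall x y, solidT x -> solidT y -> eqST x y -> eqST (F x) (F y)) /\
  (forall x y, solidT x -> solidT y -> eqST (F x) (F y) -> eqST x y) /\
  (forall x, solidT x -> int_solidT (F x)).

Definition U_gamma (g : R -> 'rV[R]_3) (F : 'rV[R]_3 -> 'rV[R]_3) : Prop :=
  solid_torus_embedding F /\ isotopic (fun t => F (pt t 0 0)) g.

Definition in_cone (alpha : R) (u : 'rV[R]_3) : Prop :=
  enorm2 (u 0 1) (u 0 2) <= alpha * `|u 0 0|.

Definition U_part_hyp (g : R -> 'rV[R]_3) (F : 'rV[R]_3 -> 'rV[R]_3) : Prop :=
  U_gamma g F /\
  exists (alpha : R) (l : nat) (lambda : R),
    0 < alpha /\ (1 <= l)%N /\ 1 < lambda /\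
    forall x, solidT x ->
      (exists beta : R, beta < alpha /\
         forall u, in_cone alpha u -> in_cone beta ('d (iter l F) x u)) /\
      (forall u, in_cone alpha u ->
         lambda * `|u 0 0| <= `|('d (iter l F) x u) 0 0|).

Definition C1_fun (h : R -> R) : Prop :=
  (forall t, derivable h t 1) /\ continuous (derive1 h).

Definition braid_rep (n : int) (z1 z2 : R -> R) : R -> 'rV[R]_3 :=
  fun t => pt (n%:~R * t) (z1 t) (z2 t).

Definition canonical_solenoid (n : int) (z1 z2 : R -> R) (delta : R)
  : 'rV[R]_3 -> 'rV[R]_3 :=
  fun x => pt (n%:~R * thc x) (delta * w1c x + z1 (thc x))
              (delta * w2c x + z2 (thc x)).

End SolidTorus.

(* The canonical solenoid map f(t, w) = (n t, delta w + z(t)) has differential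
   (u1, u2) |-> (n u1, delta u2 + u1 z'(t)).  By periodicity z' is bounded, say
   by K, and 2 delta < 1; hence the cone |u2| <= (K + 1) |u1| is mapped into the
   cone of aperture (2 delta (K + 1) + K) / |n| < K + 1 (this is where |n| >= 2
   is used), and the u1-component is expanded by |n| >= 2.  The conditions on
   delta make f an embedding into the interior whose core circle is the braid.
   For non-emptiness, shrink the braid to z/2, which is isotopic to z: by
   compactness the strands t |-> z(t) and t |-> z(t + k/n), 0 < k < |n|, stay a
   positive distance apart, which yields an admissible delta. *)
From mathcomp Require Import all_boot all_order all_algebra.
From mathcomp Require Import all_classical all_reals all_analysis.
From mathcomp Require Import ring lra zify.
Import Order.TTheory GRing.Theory Num.Theory.
Import numFieldNormedType.Exports.
Local Open Scope classical_set_scope.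
Local Open Scope ring_scope.

Set Implicit Arguments. Unset Strict Implicit. Unset Printing Implicit Defensive.

Section Enorm2.
Variable R : realType.
Implicit Types a b c d k : R.

Lemma enorm2_ge0 a b : 0 <= enorm2 a b.
Proof. exact: sqrtr_ge0. Qed.

Lemma enorm2_sqr a b : enorm2 a b ^+ 2 = a ^+ 2 + b ^+ 2.
Proof. by rewrite sqr_sqrtr // addr_ge0 // sqr_ge0. Qed.

Lemma enorm2_le a b c : 0 <= c -> a ^+ 2 + b ^+ 2 <= c ^+ 2 -> enorm2 a b <= c.
Proof. by move=> c0 h; rewrite -(ger0_norm c0) -sqrtr_sqr /enorm2 ler_sqrt // sqr_ge0. Qed.

Lemma enorm2_ge_absl a b : `|a| <= enorm2 a b.
Proof. by rewrite -sqrtr_sqr /enorm2 ler_sqrt ?lerDl ?sqr_ge0 // addr_ge0 ?sqr_ge0. Qed.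

Lemma enorm2_ge_absr a b : `|b| <= enorm2 a b.
Proof. by rewrite -sqrtr_sqr /enorm2 ler_sqrt ?lerDr ?sqr_ge0 // addr_ge0 ?sqr_ge0. Qed.

Lemma enorm2_le_abs a b : enorm2 a b <= `|a| + `|b|.
Proof.
apply: enorm2_le; first by rewrite addr_ge0.
rewrite sqrrD !real_normK ?num_real // -mulr_natr.
have : 0 <= `|a| * `|b| by rewrite mulr_ge0.
nra.
Qed.

Lemma enorm2Z k a b : 0 <= k -> enorm2 (k * a) (k * b) = k * enorm2 a b.
Proof.
move=> k0; rewrite /enorm2 !exprMn -mulrDr sqrtrM ?sqr_ge0 //.
by rewrite sqrtr_sqr ger0_norm.
Qed.

Lemma enorm2N a b : enorm2 (- a) (- b) = enorm2 a b.
Proof. by rewrite /enorm2 !sqrrN. Qed.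

Lemma enorm2D a b c d : enorm2 (a + b) (c + d) <= enorm2 a c + enorm2 b d.
Proof.
apply: enorm2_le; first by rewrite addr_ge0 ?enorm2_ge0.
have cauchy_schwarz : a * b + c * d <= enorm2 a c * enorm2 b d.
  have h0 : 0 <= enorm2 a c * enorm2 b d by rewrite mulr_ge0 ?enorm2_ge0.
  have h1 : (a * b + c * d) ^+ 2 <= (enorm2 a c * enorm2 b d) ^+ 2.
    rewrite exprMn !enorm2_sqr; have := sqr_ge0 (a * d - b * c); nra.
  case: (lerP (a * b + c * d) 0) => h; first exact: le_trans h h0.
  by rewrite -(ler_pXn2r (n:=2)) // ?nnegrE // ltW.
rewrite [X in _ <= X]sqrrD !enorm2_sqr -mulr_natr; nra.
Qed.

End Enorm2.

Section RealFunctions.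
Variable R : realType.
Implicit Types f : R -> R.

Lemma periodicz f : (forall t, f (t + 1) = f t) ->
  forall (k : int) t, f (t + k%:~R) = f t.
Proof.
move=> f1; have fn (m : nat) t : f (t + m%:R) = f t.
  by elim: m t => [|m IH] t; rewrite ?addr0 // -natr1 addrA f1 IH.
case=> [m|m] t; first exact: fn.
by rewrite NegzE mulrNz -[in RHS](subrK m.+1%:~R t) fn.
Qed.

Lemma floor_decomp (t : R) : exists (k : int) (s : R), 0 <= s < 1 /\ t = s + k%:~R.
Proof.
exists (Num.floor t), (t - (Num.floor t)%:~R); split; last by rewrite subrK.
have /andP[h1 h2] := floor_itv t.
rewrite intrD in h2; apply/andP; split; lra.
Qed.

Lemma derive1_periodic f : (forall t, f (t + 1) = f t) ->
  forall t, derive1 f (t + 1) = derive1 f t.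
Proof.
move=> f1 t; rewrite /derive1.
suff -> : (fun h => h^-1 *: (f (h + (t + 1)) - f (t + 1))) =
          (fun h => h^-1 *: (f (h + t) - f t)) by [].
by apply/funext => h; rewrite addrA !f1.
Qed.

Lemma periodic_EVT_max f : continuous f -> (forall t, f (t + 1) = f t) ->
  exists c, forall t, f t <= f c.
Proof.
move=> cf f1; have cf01 : {within `[(0:R), 1], continuous f}.
  exact: continuous_subspaceT.
have [c _ hc] := EVT_max ler01 cf01.
exists c => t; have [k [s [/andP[s0 s1] ->]]] := floor_decomp t.
by rewrite periodicz //; apply: hc; rewrite in_itv /= s0 ltW.
Qed.

Lemma periodic_EVT_min f : continuous f -> (forall t, f (t + 1) = f t) ->
  exists c, forall t, f c <= f t.
Proof.
move=> cf f1.
have [c hc] := @periodic_EVT_max (- f) (fun x => continuousN (cf x)) (fun t => congr1 -%R (f1 t)).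
by exists c => t; have := hc t; rewrite !fctE lerN2.
Qed.

Lemma derive1_periodic_bounded f : C1_fun f -> (forall t, f (t + 1) = f t) ->
  exists K, forall t, `|derive1 f t| <= K.
Proof.
move=> [_ cf'] f1.
have cnf' : continuous (fun t => `|derive1 f t|).
  by move=> x; exact: (continuous_comp (cf' x) (@norm_continuous _ _ _)).
have [c hc] := periodic_EVT_max cnf' (fun t => congr1 Num.norm (derive1_periodic f1 t)).
by exists `|derive1 f c|.
Qed.

Lemma periodic_pos_lower_bound f : continuous f -> (forall t, f (t + 1) = f t) ->
  (forall t, 0 < f t) -> exists2 m, 0 < m & forall t, m <= f t.
Proof. by move=> cf f1 fpos; have [c hc] := periodic_EVT_min cf f1; exists (f c). Qed.

Lemma C1_fun_continuous f : C1_fun f -> continuous f.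
Proof. by move=> [df _] x; apply: differentiable_continuous; apply/derivable1_diffP. Qed.

Lemma C1_funZ f c : C1_fun f -> C1_fun (fun t => c * f t).
Proof.
move=> [df cf']; split=> [t|]; first exact: derivableZ.
have -> : derive1 (fun t => c * f t) = (fun t => c * derive1 f t).
  by apply/funext => t; rewrite derive1Ml.
by move=> x; apply: continuousM; [exact: cst_continuous|exact: cf'].
Qed.

Lemma uniform_pos_lower_bound (T : Type) (g : nat -> T -> R) (N : nat) :
  (forall k, (0 < k < N)%N -> exists2 m, 0 < m & forall t, m <= g k t) ->
  exists2 m, 0 < m & forall k, (0 < k < N)%N -> forall t, m <= g k t.
Proof.
elim: N => [|N IH] hg; first by exists 1 => // k; rewrite ltn0 andbF.
have [m m0 hm] : exists2 m, 0 < m & forall k, (0 < k < N)%N -> forall t, m <= g k t.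
  by apply: IH => k /andP[k0 kN]; apply: hg; rewrite k0 ltnW.
have [N0|N0] := posnP N; first by exists m => // k; rewrite N0 ltnS leqn0 andbC => /andP[/eqP->].
have [m' m'0 hm'] : exists2 m, 0 < m & forall t, m <= g N t by apply: hg; rewrite N0 ltnSn.
exists (Num.min m m') => [|k /andP[k0]]; first by rewrite lt_min m0 m'0.
rewrite ltnS leq_eqVlt => /orP[/eqP-> t|kN t]; first by rewrite ge_min hm' orbT.
by rewrite ge_min hm // k0 kN.
Qed.

End RealFunctions.

Section Coordinates.
Variable R : realType.

Lemma pt_coord0 (a b c : R) : pt a b c 0 0 = a. Proof. by rewrite mxE. Qed.
Lemma pt_coord1 (a b c : R) : pt a b c 0 1 = b. Proof. by rewrite mxE. Qed.
Lemma pt_coord2 (a b c : R) : pt a b c 0 2 = c. Proof. by rewrite mxE. Qed.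

Lemma ptE (a b c : R) : pt a b c = a *: pt 1 0 0 + b *: pt 0 1 0 + c *: pt 0 0 1.
Proof.
apply/rowP => i; rewrite !mxE.
by case: i => [[|[|[|//]]] ?]; cbn [nth nat_of_ord]; rewrite ?mulr1 ?mulr0 ?addr0 ?add0r.
Qed.

Lemma continuous_pt (T : topologicalType) (A B C : T -> R) :
  continuous A -> continuous B -> continuous C ->
  continuous (fun y => pt (A y) (B y) (C y)).
Proof.
move=> cA cB cC; rewrite (_ : (fun y => _) =
  (fun y => A y *: pt 1 0 0 + B y *: pt 0 1 0 + C y *: pt 0 0 1)); last first.
  by apply/funext => y; rewrite ptE.
move=> x.
have cA' : {for x, continuous (fun y => A y *: (pt 1 0 0 : 'rV[R]_3))}.
  exact: continuousZr_tmp (cA x).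
have cB' : {for x, continuous (fun y => B y *: (pt 0 1 0 : 'rV[R]_3))}.
  exact: continuousZr_tmp (cB x).
have cC' : {for x, continuous (fun y => C y *: (pt 0 0 1 : 'rV[R]_3))}.
  exact: continuousZr_tmp (cC x).
exact: continuousD (continuousD cA' cB') cC'.
Qed.

Lemma differentiable_pt (V : normedModType R) (A B C : V -> R) (x : V) :
  differentiable A x -> differentiable B x -> differentiable C x ->
  differentiable (fun y => pt (A y) (B y) (C y)) x /\
  forall h, 'd (fun y => pt (A y) (B y) (C y)) x h = pt ('d A x h) ('d B x h) ('d C x h).
Proof.
move=> dA dB dC.
set e0 : 'rV[R]_3 := pt 1 0 0; set e1 : 'rV[R]_3 := pt 0 1 0; set e2 : 'rV[R]_3 := pt 0 0 1.
have -> : (fun y => pt (A y) (B y) (C y)) = (fun y => A y *: e0 + B y *: e1 + C y *: e2).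
  by apply/funext => y; rewrite ptE.
have dA' : differentiable (fun y => A y *: e0) x by exact: differentiableZl.
have dB' : differentiable (fun y => B y *: e1) x by exact: differentiableZl.
have dC' : differentiable (fun y => C y *: e2) x by exact: differentiableZl.
have dAB := differentiableD dA' dB'.
have dABC := differentiableD dAB dC'.
split; first exact: dABC.
move=> h; rewrite [RHS]ptE -/e0 -/e1 -/e2.
apply: (etrans (congr1 (fun f => f h) (diffD dAB dC'))).
apply: (etrans (congr1 (fun w => w + _) (congr1 (fun f => f h) (diffD dA' dB')))).
congr (_ + _ + _); [exact: (congr1 (fun f => f h) (diffZl e0 dA))
  |exact: (congr1 (fun f => f h) (diffZl e1 dB))
  |exact: (congr1 (fun f => f h) (diffZl e2 dC))].
Qed.

Lemma diff_coord (m k : nat) (i : 'I_m) (j : 'I_k) (M : 'M[R]_(m, k)) :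
  'd (fun N : 'M[R]_(m, k) => N i j) M = (fun N : 'M[R]_(m, k) => N i j) :> (_ -> _).
Proof.
have @f : {linear 'M[R]_(m, k) -> R}.
  by exists (fun N : 'M[R]_(m, k) => N i j); do 2![eexists]; do ?[constructor];
     rewrite ?mxE// => ? *; rewrite ?mxE//; move=> ?; rewrite !mxE.
by rewrite (_ : (fun _ => _) = f) // diff_lin //; exact: coord_continuous.
Qed.

Lemma diff_scale_coord (a : R) (j : 'I_3) (x : 'rV[R]_3) :
  differentiable (fun y : 'rV[R]_3 => a * y 0 j) x /\
  'd (fun y : 'rV[R]_3 => a * y 0 j) x = (fun h : 'rV[R]_3 => a * h 0 j) :> (_ -> _).
Proof.
have dc := differentiable_coord x 0 j.
split; first exact: differentiableZ dc.
by rewrite (diffZ a dc) diff_coord.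
Qed.

Lemma diff_comp_coord (g : R -> R) (j : 'I_3) (x : 'rV[R]_3) :
  derivable g (x 0 j) 1 ->
  differentiable (fun y : 'rV[R]_3 => g (y 0 j)) x /\
  'd (fun y : 'rV[R]_3 => g (y 0 j)) x =
    (fun h : 'rV[R]_3 => h 0 j * derive1 g (x 0 j)) :> (_ -> _).
Proof.
move=> /derivable1_diffP dg; have dc := differentiable_coord x 0 j.
split; first exact: differentiable_comp dc dg.
by rewrite (diff_comp dc dg) (diff1E dg) diff_coord.
Qed.

Lemma diff_affine_coord (a : R) (g : R -> R) (i j : 'I_3) (x : 'rV[R]_3) :
  derivable g (x 0 j) 1 ->
  differentiable (fun y : 'rV[R]_3 => a * y 0 i + g (y 0 j)) x /\
  forall h, 'd (fun y : 'rV[R]_3 => a * y 0 i + g (y 0 j)) x h =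
    a * h 0 i + h 0 j * derive1 g (x 0 j).
Proof.
move=> dg; have [da Ea] := diff_scale_coord a i x.
have [dg' Eg] := diff_comp_coord dg.
split; first exact: differentiableD da dg'.
move=> h; apply: (etrans (congr1 (fun f => f h) (diffD da dg'))) => /=.
by rewrite Ea Eg.
Qed.

Lemma in_cone_solenoid_diff (N a b d K : R) (u : 'rV[R]_3) :
  0 < `|N| -> 0 <= d -> `|a| + `|b| <= K -> in_cone (K + 1) u ->
  in_cone ((2 * d * (K + 1) + K) / `|N|)
    (pt (N * u 0 0) (d * u 0 1 + u 0 0 * a) (d * u 0 2 + u 0 0 * b)).
Proof.
move=> N0 d0 abK; rewrite /in_cone pt_coord0 pt_coord1 pt_coord2 normrM => uC.
rewrite mulrA divfK ?gt_eqF //.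
have normD (c v : R) : `|d * v + u 0 0 * c| <= d * `|v| + `|u 0 0| * `|c|.
  by apply: le_trans (ler_normD _ _) _; rewrite !normrM (ger0_norm d0).
have u1 : d * `|u 0 1| <= d * ((K + 1) * `|u 0 0|).
  by rewrite ler_wpM2l // (le_trans (enorm2_ge_absl _ _) uC).
have u2 : d * `|u 0 2| <= d * ((K + 1) * `|u 0 0|).
  by rewrite ler_wpM2l // (le_trans (enorm2_ge_absr _ _) uC).
have uab : `|u 0 0| * (`|a| + `|b|) <= `|u 0 0| * K by rewrite ler_wpM2l.
have := enorm2_le_abs (d * u 0 1 + u 0 0 * a) (d * u 0 2 + u 0 0 * b).
have := normD a (u 0 1); have := normD b (u 0 2); nra.
Qed.

End Coordinates.

Section CanonicalSolenoid.
Variables (R : realType) (n : int) (z1 z2 : R -> R) (delta : R).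
Hypotheses (z1C1 : C1_fun z1) (z2C1 : C1_fun z2).
Hypothesis z_periodic : forall t, z1 (t + 1) = z1 t /\ z2 (t + 1) = z2 t.
Hypothesis delta_gt0 : 0 < delta.
Local Notation F := (canonical_solenoid n z1 z2 delta).

Lemma thc_solenoid x : thc (F x) = n%:~R * thc x. Proof. exact: pt_coord0. Qed.
Lemma w1c_solenoid x : w1c (F x) = delta * w1c x + z1 (thc x). Proof. exact: pt_coord1. Qed.
Lemma w2c_solenoid x : w2c (F x) = delta * w2c x + z2 (thc x). Proof. exact: pt_coord2. Qed.

Lemma diff_solenoid x : differentiable F x /\
  forall h, 'd F x h = pt (n%:~R * h 0 0) (delta * h 0 1 + h 0 0 * derive1 z1 (x 0 0))
                         (delta * h 0 2 + h 0 0 * derive1 z2 (x 0 0)).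
Proof.
have [dA EA] := diff_scale_coord n%:~R 0 x.
have [dB EB] := diff_affine_coord delta 1 (z1C1.1 (x 0 0)).
have [dC EC] := diff_affine_coord delta 2 (z2C1.1 (x 0 0)).
have [dF EF] := differentiable_pt dA dB dC.
split; first exact: dF.
by move=> h; rewrite EF EA EB EC.
Qed.

Lemma solenoid_C1 : C1_on F (@solidT R).
Proof.
split=> [x _|v]; first exact: (diff_solenoid x).1.
apply: continuous_subspaceT.
have -> : (fun x => 'D_v F x) = (fun x : 'rV[R]_3 =>
    pt (n%:~R * v 0 0) (delta * v 0 1 + v 0 0 * derive1 z1 (x 0 0))
       (delta * v 0 2 + v 0 0 * derive1 z2 (x 0 0))).
  by apply/funext => x; have [dF EF] := diff_solenoid x; rewrite deriveE // EF.
have cz' (z : R -> R) : C1_fun z -> forall i : 'I_3,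
    continuous (fun x : 'rV[R]_3 => delta * v 0 i + v 0 0 * derive1 z (x 0 0)).
  move=> [_ cz] i x.
  have cz0 : {for x, continuous (fun y : 'rV[R]_3 => derive1 z (y 0 0))}.
    exact: (continuous_comp (@coord_continuous R 1 3 0 0 x) (cz _)).
  have cst (k : R) : {for x, continuous (fun _ : 'rV[R]_3 => k)} by exact: cst_continuous.
  exact: continuousD (cst _) (continuousM (cst _) cz0).
by apply: continuous_pt; [exact: cst_continuous|exact: cz'|exact: cz'].
Qed.

Hypothesis z_inside : forall t, 1 - enorm2 (z1 t) (z2 t) > 2 * delta.
Hypothesis z_separated : forall t1 t2, ~ same_circle t1 t2 ->
  same_circle (n%:~R * t1) (n%:~R * t2) ->
  enorm2 (z1 t1 - z1 t2) (z2 t1 - z2 t2) > 2 * delta.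

Let z1_periodic := periodicz (fun t => (z_periodic t).1).
Let z2_periodic := periodicz (fun t => (z_periodic t).2).

Lemma solenoid_eqST x y : eqST x y -> eqST (F x) (F y).
Proof.
move=> [[k hk] [e1 e2]]; rewrite /eqST !thc_solenoid !w1c_solenoid !w2c_solenoid.
rewrite hk z1_periodic z2_periodic e1 e2; split=> //.
by exists (n * k); rewrite intrM mulrDr.
Qed.

(* Two points over distinct lifts of the same circle point lie in the images of
   fibres whose centres z(t1), z(t2) are more than 2 delta apart. *)
Lemma solenoid_injective x y : solidT x -> solidT y -> eqST (F x) (F y) -> eqST x y.
Proof.
rewrite /eqST !thc_solenoid !w1c_solenoid !w2c_solenoid => hx hy [hk [e1 e2]].
have [[j hj]|hs] := pselect (same_circle (thc x) (thc y)); last first.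
  suff : enorm2 (z1 (thc x) - z1 (thc y)) (z2 (thc x) - z2 (thc y)) <= 2 * delta.
    by rewrite leNgt z_separated.
  have -> : z1 (thc x) - z1 (thc y) = delta * (w1c y + - w1c x) by lra.
  have -> : z2 (thc x) - z2 (thc y) = delta * (w2c y + - w2c x) by lra.
  rewrite (enorm2Z _ _ (ltW delta_gt0)) [X in _ <= X]mulrC ler_wpM2l ?(ltW delta_gt0) //.
  apply: le_trans (enorm2D _ _ _ _) _; rewrite enorm2N.
  by move: hx hy; rewrite /solidT /= -/(w1c _) -/(w2c _); lra.
rewrite hj z1_periodic z2_periodic in e1 e2.
have d0 : delta != 0 by rewrite gt_eqF.
split; first by exists j.
by split; apply: (mulfI d0); [exact: (addIr _ e1)|exact: (addIr _ e2)].
Qed.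

Lemma solenoid_into_interior x : solidT x -> int_solidT (F x).
Proof.
rewrite /int_solidT /solidT /= -!/(w1c _) -!/(w2c _) w1c_solenoid w2c_solenoid => hx.
apply: le_lt_trans (enorm2D _ _ _ _) _.
rewrite (enorm2Z _ _ (ltW delta_gt0)).
have : delta * enorm2 (w1c x) (w2c x) <= delta by rewrite ler_piMr ?(ltW delta_gt0).
by have := z_inside (thc x); have := delta_gt0; lra.
Qed.

Lemma solenoid_embedding : solid_torus_embedding F.
Proof.
split; first exact: solenoid_C1.
split; first by move=> x y _ _; exact: solenoid_eqST.
by split; [exact: solenoid_injective|exact: solenoid_into_interior].
Qed.

Lemma solenoid_cone_field : (2 <= `|n|)%N ->
  exists (alpha : R) (l : nat) (lambda : R),
    0 < alpha /\ (1 <= l)%N /\ 1 < lambda /\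
    forall x, solidT x ->
      (exists beta : R, beta < alpha /\
         forall u, in_cone alpha u -> in_cone beta ('d (iter l F) x u)) /\
      (forall u, in_cone alpha u ->
         lambda * `|u 0 0| <= `|('d (iter l F) x u) 0 0|).
Proof.
move=> n2; have N2 : 2 <= `|(n%:~R : R)|.
  by rewrite -intr_norm -natr_absz (ler_nat R 2).
have [K1 hK1] := derive1_periodic_bounded z1C1 (fun t => (z_periodic t).1).
have [K2 hK2] := derive1_periodic_bounded z2C1 (fun t => (z_periodic t).2).
have K0 : 0 <= K1 + K2.
  by apply: addr_ge0; [apply: le_trans (hK1 0)|apply: le_trans (hK2 0)].
have delta_lt : 2 * delta < 1.
  by have := z_inside 0; have := enorm2_ge0 (z1 0) (z2 0); lra.
exists (K1 + K2 + 1), 1%N, 2; split; first lra.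
split=> //; split; first lra.
move=> x _; have [_ EF] := diff_solenoid x; split.
- exists ((2 * delta * (K1 + K2 + 1) + (K1 + K2)) / `|(n%:~R : R)|); split.
    by rewrite ltr_pdivrMr; nra.
  move=> u uC; rewrite [X in in_cone _ X]EF.
  apply: in_cone_solenoid_diff => //; first lra; first exact: ltW.
  by apply: lerD; [exact: hK1|exact: hK2].
- by move=> u _; rewrite EF pt_coord0 normrM ler_wpM2r.
Qed.

Lemma solenoid_part_hyp (g : R -> 'rV[R]_3) :
  (2 <= `|n|)%N -> isotopic (braid_rep n z1 z2) g -> U_part_hyp g F.
Proof.
move=> n2 iso; split; last exact: solenoid_cone_field.
split; first exact: solenoid_embedding.
suff -> : (fun t => F (pt t 0 0)) = braid_rep n z1 z2 by [].
apply/funext => t; rewrite /canonical_solenoid /thc /w1c /w2c.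
by rewrite pt_coord0 pt_coord1 pt_coord2 !mulr0 !add0r.
Qed.

End CanonicalSolenoid.

Section BraidRep.
Variables (R : realType) (n : int) (z1 z2 : R -> R).
Hypotheses (z1C1 : C1_fun z1) (z2C1 : C1_fun z2).
Hypothesis z_periodic : forall t, z1 (t + 1) = z1 t /\ z2 (t + 1) = z2 t.
Hypothesis gamma_embedding : circle_embedding (braid_rep n z1 z2).

Let z1_periodic := periodicz (fun t => (z_periodic t).1).
Let z2_periodic := periodicz (fun t => (z_periodic t).2).

Lemma braid_rep_in_disc t : enorm2 (z1 t) (z2 t) <= 1.
Proof.
have [_ [_ [inside _]]] := gamma_embedding.
by have := inside t; rewrite /solidT /= /w1c /w2c /braid_rep pt_coord1 pt_coord2.
Qed.

Lemma circle_embedding_braid_repZ (c : R) : 0 < c <= 1 ->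
  circle_embedding (braid_rep n (fun t => c * z1 t) (fun t => c * z2 t)).
Proof.
case/andP=> c0 c1; have [_ [_ [_ inj]]] := gamma_embedding.
split; last split; last split.
- have cn : continuous (fun _ : R => (n%:~R : R)) by exact: cst_continuous.
  have cid : continuous (fun t : R => t) by move=> t; exact: cvg_id.
  apply: continuous_pt; last exact: C1_fun_continuous (C1_funZ c z2C1).
    by move=> t; exact: continuousM (cn t) (cid t).
  exact: C1_fun_continuous (C1_funZ c z1C1).
- move=> t; rewrite /eqST /thc /w1c /w2c /braid_rep !pt_coord0 !pt_coord1 !pt_coord2.
  have [-> ->] := z_periodic t; split=> //.
  by exists n; rewrite mulrDr mulr1.
- move=> t; rewrite /solidT /= /w1c /w2c /braid_rep !pt_coord1 !pt_coord2.
  rewrite (enorm2Z _ _ (ltW c0)).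
  by have := braid_rep_in_disc t; have := enorm2_ge0 (z1 t) (z2 t); nra.
- move=> s t; rewrite /eqST /thc /w1c /w2c /braid_rep !pt_coord0 !pt_coord1 !pt_coord2.
  move=> [hst [e1 e2]]; apply: inj.
  rewrite /eqST /thc /w1c /w2c /braid_rep !pt_coord0 !pt_coord1 !pt_coord2.
  have c0' : c != 0 by rewrite gt_eqF.
  by split=> //; split; apply: (mulfI c0').
Qed.

Lemma isotopic_braid_repZ (c : R) : 0 < c <= 1 ->
  isotopic (braid_rep n (fun t => c * z1 t) (fun t => c * z2 t)) (braid_rep n z1 z2).
Proof.
move=> /andP[c0 c1]; pose sc (s : R) := c + (1 - c) * s.
exists (fun s => braid_rep n (fun t => sc s * z1 t) (fun t => sc s * z2 t)).
split; last split; last split.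
- apply: continuous_subspaceT.
  have cfst : continuous (@fst R R) by move=> p; exact: cvg_fst.
  have csnd : continuous (@snd R R) by move=> p; exact: cvg_snd.
  have cst (k : R) : continuous (fun _ : R * R => k) by exact: cst_continuous.
  have csc : continuous (fun p : R * R => sc p.1).
    by move=> p; exact: continuousD (cst c p) (continuousM (cst (1 - c) p) (cfst p)).
  have cz (z : R -> R) : C1_fun z -> continuous (fun p : R * R => sc p.1 * z p.2).
    move=> /C1_fun_continuous cz p.
    exact: continuousM (csc p) (continuous_comp (csnd p) (cz _)).
  apply: continuous_pt; [|exact: cz|exact: cz].
  by move=> p; exact: continuousM (cst _ p) (csnd p).
- move=> s /andP[s0 s1]; apply: circle_embedding_braid_repZ.
  by rewrite /sc; apply/andP; split; nra.
- by move=> t; rewrite /sc mulr0 addr0.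
- by move=> t; rewrite /sc mulr1 addrC subrK /braid_rep !mul1r.
Qed.

Lemma braid_rep_shift_gap_gt0 (k : nat) : (0 < k < `|n|)%N -> forall t,
  0 < (z1 t - z1 (t + k%:R / n%:~R)) ^+ 2 + (z2 t - z2 (t + k%:R / n%:~R)) ^+ 2.
Proof.
move=> /andP[k0 kn] t; have [_ [_ [_ inj]]] := gamma_embedding.
have nR : (n%:~R : R) != 0 by rewrite intr_eq0; apply: contraTneq kn => ->.
rewrite lt_neqAle addr_ge0 ?sqr_ge0 // andbT eq_sym paddr_eq0 ?sqr_ge0 //.
rewrite !sqrf_eq0 !subr_eq0; apply/negP => /andP[/eqP e1 /eqP e2].
have [i hi] : same_circle t (t + k%:R / n%:~R).
  apply: inj; rewrite /eqST /thc /w1c /w2c /braid_rep !pt_coord0 !pt_coord1 !pt_coord2.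
  by split=> //; exists k; rewrite mulrDr mulrCA divff // mulr1.
have /eqP ki : k%:Z == i * n.
  have e : k%:R / n%:~R = (i%:~R : R) by apply: (addrI t).
  by apply/eqP/(@intr_inj R); rewrite intrM -e divfK.
have : (`|n| %| k)%N by rewrite -(absz_nat k) ki abszM dvdn_mull.
by move=> /(dvdn_leq k0); rewrite leqNgt kn.
Qed.

Lemma same_circle_mulz (t1 t2 : R) : n != 0 ->
  same_circle (n%:~R * t1) (n%:~R * t2) ->
  exists (r : nat) (q : int), (r < `|n|)%N /\ t2 = t1 + r%:R / n%:~R + q%:~R.
Proof.
move=> n0 [j hj]; have nR : (n%:~R : R) != 0 by rewrite intr_eq0.
exists `|(j %% n)%Z|%N, (j %/ n)%Z; split.
  by have := modz_ge0 j n0; have := ltz_mod j n0; lia.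
rewrite natr_absz ger0_norm ?ler0z ?modz_ge0 //.
by apply: (mulfI nR); rewrite hj {1}(divz_eq j n) intrD intrM; field.
Qed.

Lemma braid_rep_separated : (2 <= `|n|)%N ->
  exists2 e, 0 < e & forall t1 t2, ~ same_circle t1 t2 ->
    same_circle (n%:~R * t1) (n%:~R * t2) ->
    e <= enorm2 (z1 t1 - z1 t2) (z2 t1 - z2 t2).
Proof.
move=> n2; have n0 : n != 0 by apply: contraTneq n2 => ->.
pose gap (k : nat) (t : R) :=
  (z1 t - z1 (t + k%:R / n%:~R)) ^+ 2 + (z2 t - z2 (t + k%:R / n%:~R)) ^+ 2.
have [m m0 hm] : exists2 m, 0 < m & forall k, (0 < k < `|n|)%N -> forall t, m <= gap k t.
  apply: uniform_pos_lower_bound => k kn; apply: periodic_pos_lower_bound.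
  - have cz (z : R -> R) : C1_fun z ->
        continuous (fun t => (z t - z (t + k%:R / n%:~R)) ^+ 2).
      move=> /C1_fun_continuous cz t.
      have csh : {for t, continuous (fun s : R => z (s + k%:R / n%:~R))}.
        have cshift : {for t, continuous (fun s : R => s + k%:R / n%:~R)}.
          have cid : {for t, continuous (fun s : R => s)} by exact: cvg_id.
          have ck : {for t, continuous (fun _ : R => k%:R / n%:~R : R)}.
            exact: cst_continuous.
          exact: continuousD cid ck.
        exact: continuous_comp cshift (cz _).
      exact: continuousM (continuousB (cz t) csh) (continuousB (cz t) csh).
    by move=> t; exact: continuousD (cz _ z1C1 t) (cz _ z2C1 t).
  - move=> t; rewrite /gap (addrAC t).
    by have [-> ->] := z_periodic t; have [-> ->] := z_periodic (t + k%:R / n%:~R).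
  - exact: braid_rep_shift_gap_gt0.
exists (Num.sqrt m); first by rewrite sqrtr_gt0.
move=> t1 t2 t12 /(same_circle_mulz n0) [r [q [rn e2]]]; rewrite {}e2 in t12 *.
case: r rn t12 => [|r] rn t12; first by case: t12; exists q; rewrite mul0r addr0.
rewrite z1_periodic z2_periodic /enorm2 ler_sqrt ?addr_ge0 ?sqr_ge0 //.
exact: hm.
Qed.

End BraidRep.

Unset Implicit Arguments.

Theorem mainTheorem10 (R : realType) (n : int) (z1 z2 : R -> R) :
  (2 <= `|n|)%N ->
  C1_fun z1 -> C1_fun z2 ->
  (forall t, z1 (t + 1) = z1 t /\ z2 (t + 1) = z2 t) ->
  circle_embedding (braid_rep n z1 z2) ->
  (forall delta : R,
    0 < delta ->
    (forall t, 1 - enorm2 (z1 t) (z2 t) > 2 * delta) ->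
    (forall t1 t2, ~ same_circle t1 t2 ->
       same_circle (n%:~R * t1) (n%:~R * t2) ->
       enorm2 (z1 t1 - z1 t2) (z2 t1 - z2 t2) > 2 * delta) ->
    U_part_hyp (braid_rep n z1 z2) (canonical_solenoid n z1 z2 delta))
  /\
  (exists F, U_part_hyp (braid_rep n z1 z2) F).
Proof.
move=> n2 z1C1 z2C1 z_per gamma; split.
  move=> delta d0 inside sep; apply: (solenoid_part_hyp z1C1 z2C1 z_per d0 inside sep n2).
  have := isotopic_braid_repZ z1C1 z2C1 z_per gamma (c := 1).
  have mul1 (z : R -> R) : (fun t => 1 * z t) = z by apply/funext => t; rewrite mul1r.
  by rewrite !mul1 ltr01 lexx; apply.
(* z may touch the boundary of the disc; its half-size copy, isotopic to it,
   leaves room for the canonical solenoid maps. *)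
have [e e0 he] := braid_rep_separated z1C1 z2C1 z_per gamma n2.
pose c : R := 2^-1; pose delta := Num.min 1 e / 8.
have c0 : 0 < c by rewrite invr_gt0.
have c1 : c <= 1 by rewrite invf_le1 // ler1n.
have d0 : 0 < delta by rewrite divr_gt0 // lt_min ltr01 e0.
have d1 : delta <= 1 / 8 by rewrite ler_pM2r ?invr_gt0 // ge_min lexx.
have de : delta <= e / 8 by rewrite ler_pM2r ?invr_gt0 // ge_min lexx orbT.
exists (canonical_solenoid n (fun t => c * z1 t) (fun t => c * z2 t) delta).
apply: (solenoid_part_hyp (C1_funZ c z1C1) (C1_funZ c z2C1) _ d0) => //.
- by move=> t; have [-> ->] := z_per t.
- move=> t; rewrite (enorm2Z _ _ (ltW c0)).
  by have := braid_rep_in_disc gamma t; rewrite /c; lra.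
- move=> t1 t2 t12 nt12; rewrite -!mulrBr (enorm2Z _ _ (ltW c0)).
  by have := he t1 t2 t12 nt12; rewrite /c; lra.
- by apply: isotopic_braid_repZ => //; rewrite c0 c1.
Qed.
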